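(* Let $p\ge 1$ be odd and $q\ge 2$, and let $R_p(p,q)$ be the prolate rectangle-shaped hexagonal system with parameters $p,q$. Then $$cf(R_p(p,q))=\frac{p+1}{2}\,(q+1).$$
   Context: A hexagonal system (HS) is a finite 2-connected plane graph in which every interior face is a regular hexagon of the hexagonal lattice; it is drawn with some edges vertical, so that hexagons form horizontal rows in which consecutive hexagons share a vertical edge. $R_p(p,q)$ has $p$ horizontal rows (numbered $1,\ldots,p$ from bottom to top, $p$ odd): each odd-numbered row is a linear chain of $q$ hexagons and each even-numbered row is a linear chain of $q-1$ hexagons, consecutive rows are stacked in the hexagonal lattice, and every even row is inset half a hexagon from both ends of the adjacent odd rows (so all odd rows are vertically aligned with each other). For example $R_p(3,2)$ is perylene. For a perfect matching $M$, a forcing set of $M$ is a subset of $M$ contained in no other perfect matching; a complete forcing set of $G$ is a set $S\subseteq E(G)$ with $S\cap M$ a forcing set of $M$ for every perfect matching $M$; $cf(G)$ is the minimum size of a complete forcing set. *)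

From HB Require Import structures.
From mathcomp Require Import all_boot.
Set Implicit Arguments. Unset Strict Implicit. Unset Printing Implicit Defensive.

(* Generic graph notions on a finite vertex type T: a graph is a set of
   vertices V and a set of edges E, each edge a 2-element subset of T. *)
Section Matchings.
Variable T : finType.
Variables (V : {set T}) (E : {set {set T}}).

Definition perfect_matching (M : {set {set T}}) : bool :=
  (M \subset E) && [forall v in V, #|[set e in M | v \in e]| == 1].

Definition forcing_set (M S : {set {set T}}) : bool :=
  (S \subset M) &&
  [forall M' : {set {set T}}, (perfect_matching M' && (S \subset M')) ==> (M' == M)].

Definition complete_forcing_set (S : {set {set T}}) : bool :=
  (S \subset E) &&
  [forall M : {set {set T}}, perfect_matching M ==> forcing_set M (S :&: M)].

Definition cf_eq (N : nat) : Prop :=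
  (exists S, complete_forcing_set S /\ #|S| = N) /\
  (forall S, complete_forcing_set S -> N <= #|S|).
End Matchings.

(* ---- The hexagonal system R_p(p,q) drawn in the brick-wall model of the
   hexagonal lattice. Vertices are lattice points (x,y) with 0<=x<=2q,
   0<=y<=p.  A hexagon (brick) with lower-left corner (x,y) has the six
   vertices (x,y),(x+1,y),(x+2,y),(x,y+1),(x+1,y+1),(x+2,y+1), two vertical
   edges {(x,y),(x,y+1)}, {(x+2,y),(x+2,y+1)} and four horizontal edges.
   Row y (= row y+1 of the paper, 0 <= y < p):
   - y even (odd paper row): q hexagons with corners x = 0,2,...,2q-2;
   - y odd (even paper row): q-1 hexagons with corners x = 1,3,...,2q-3,
     i.e. inset by half a hexagon at both ends. *)

Definition Rp_vert (p q : nat) := ('I_(2 * q + 1) * 'I_(p + 1))%type.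

Definition is_hex (p q x y : nat) : bool :=
  (y < p) &&
  (if odd y then odd x && (x + 3 <= 2 * q) else ~~ odd x && (x + 2 <= 2 * q)).

Definition hadj (p q : nat) (u v : Rp_vert p q) : bool :=
  (v.2 == u.2 :> nat) && (v.1 == u.1.+1 :> nat) &&
  [exists h : Rp_vert p q,
     is_hex p q h.1 h.2 && (h.1 <= u.1) && (u.1 <= h.1 + 1) &&
     ((u.2 == h.2 :> nat) || (u.2 == h.2 + 1 :> nat))].

Definition vadj (p q : nat) (u v : Rp_vert p q) : bool :=
  (v.1 == u.1 :> nat) && (v.2 == u.2.+1 :> nat) &&
  [exists h : Rp_vert p q,
     is_hex p q h.1 h.2 && (u.2 == h.2 :> nat) &&
     ((u.1 == h.1 :> nat) || (u.1 == h.1 + 2 :> nat))].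

Definition Rp_adj (p q : nat) (u v : Rp_vert p q) : bool :=
  hadj u v || vadj u v.

Definition Rp_edges (p q : nat) : {set {set Rp_vert p q}} :=
  [set [set u; v] | u in [set: Rp_vert p q], v in [set w | Rp_adj u w]].

Definition Rp_vertices (p q : nat) : {set Rp_vert p q} :=
  [set u | [exists v, Rp_adj u v || Rp_adj v u]].

From mathcomp Require Import all_boot all_algebra zify.
Import GRing.Theory.
Set Implicit Arguments. Unset Strict Implicit. Unset Printing Implicit Defensive.

(* We work in the brick-wall model: vertices are the points (x,y)
   with x <= 2q, y <= p; every pair of horizontal neighbours is an edge, and
   (x,y)-(x,y+1) is a vertical edge ("rung") exactly when x and y have the
   same parity.

   Give (x,y) the weight (-1)^x on row y.  Each row has total
   weight 1, horizontal edges have weight 0, and a rung leaving row y has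
   weight (-1)^y.  Summing over a perfect matching M shows that M contains
   exactly one rung leaving each even row and none leaving odd rows.

   The rungs leaving even rows form a set of (p+1)/2*(q+1)
   edges.  It is a complete forcing set: if M' agrees with M on these rungs,
   then the edges of M are shown to lie in M' from left to right, since a
   horizontal edge of M can be replaced in M' neither by a rung (by the parity
   lemma) nor by an edge going further left (already known to be in M').

   For every block of rows 2j,2j+1 and column 2k there are two
   perfect matchings, placing the rung of that block at column 2k or at an
   adjacent even column, whose difference consists of edges with the label
   (j,k).  A complete forcing set must contain one of these edges, hence an
   edge of each of the (p+1)/2*(q+1) labels. *)

Section Matchings.
Variable T : finType.
Implicit Types (a b c d : T) (M : {set {set T}}).

Lemma set2_eq a b c d : [set a; b] = [set c; d] ->
  (a = c /\ b = d) \/ (a = d /\ b = c).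
Proof.
move=> e.
have /set2P ha : a \in [set c; d] by rewrite -e set21.
have /set2P hb : b \in [set c; d] by rewrite -e set22.
have /set2P hc : c \in [set a; b] by rewrite e set21.
have /set2P hd : d \in [set a; b] by rewrite e set22.
by case: ha hb hc hd => -> [] -> [] ? [] ?; subst; tauto.
Qed.

Lemma big_set2 (R : Type) (idx : R) (op : Monoid.com_law idx) a b (F : T -> R) :
  a != b -> \big[op/idx]_(v in [set a; b]) F v = op (F a) (F b).
Proof. by move=> ab; rewrite big_setU1 ?big_set1 // in_set1. Qed.

Section PerfectMatching.
Variables (V : {set T}) (E : {set {set T}}) (M : {set {set T}}).
Hypothesis pmM : perfect_matching V E M.

Lemma pm_subset : M \subset E.
Proof. by case/andP: pmM. Qed.

Lemma pm_card v : v \in V -> #|[set e in M | v \in e]| = 1.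
Proof. by case/andP: pmM => _ /forall_inP h /h /eqP. Qed.

Lemma pm_cover v : v \in V -> exists2 e, e \in M & v \in e.
Proof.
move=> /pm_card /eqP /cards1P [e he].
have : e \in [set e in M | v \in e] by rewrite he set11.
by rewrite inE => /andP [h1 h2]; exists e.
Qed.

Lemma pm_unique v e f :
  v \in V -> e \in M -> f \in M -> v \in e -> v \in f -> e = f.
Proof.
move=> /pm_card /eqP /cards1P [g hg] he hf ve vf.
have : e \in [set e in M | v \in e] by rewrite inE he ve.
have : f \in [set e in M | v \in e] by rewrite inE hf vf.
by rewrite hg => /set1P -> /set1P ->.
Qed.
End PerfectMatching.

Definition matching_of (m : T -> T) : {set {set T}} :=
  [set [set v; m v] | v in setT].

Lemma matching_ofP (m : T -> T) v w : involutive m ->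
  [set v; w] \in matching_of m -> w = m v.
Proof.
move=> mK /imsetP [u _ e].
by case: (set2_eq e) => [[-> ->] | [-> ->]]; rewrite ?mK.
Qed.

Lemma matching_of_pm (E : {set {set T}}) (m : T -> T) : involutive m ->
  (forall v, [set v; m v] \in E) -> perfect_matching [set: T] E (matching_of m).
Proof.
move=> mK mE; apply/andP; split.
  by apply/subsetP=> e /imsetP [u _ ->].
apply/forall_inP=> v _; apply/cards1P; exists [set v; m v].
apply/setP=> e; rewrite !inE; apply/andP/eqP.
- by case=> /imsetP [u _ ->] /set2P [->|->]; rewrite // mK setUC.
- by move=> ->; split; [apply/imsetP; exists v | exact: set21].
Qed.

(* A complete forcing set meets the difference of any two distinct perfect
   matchings: otherwise S :&: M1 would not force M1. *)
Lemma cfs_separates (V : {set T}) (E S M1 M2 : {set {set T}}) :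
  complete_forcing_set V E S -> perfect_matching V E M1 ->
  perfect_matching V E M2 -> M1 != M2 ->
  exists2 e, e \in S :&: M1 & e \notin M2.
Proof.
case/andP=> _ /forallP /(_ M1) cfS pm1 pm2 M12; move: cfS; rewrite pm1.
case/andP=> _ /forallP /(_ M2); rewrite pm2 /=.
case: (boolP (S :&: M1 \subset M2)) => [_ /eqP M21 | /subsetPn //].
by rewrite M21 eqxx in M12.
Qed.
End Matchings.

Lemma card_ge_of_labels (aT L : finType) (rT : eqType) (A : {pred aT})
    (label : aT -> rT) (emb : L -> rT) :
  injective emb -> (forall l, exists2 x, x \in A & label x = emb l) ->
  #|L| <= #|A|.
Proof.
move=> emb_inj hit.
have pick_l l : {x | x \in A & label x == emb l}.
  by apply: sig2W; have [x xA lx] := hit l; exists x; rewrite ?lx.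
pose f l := s2val (pick_l l).
have f_inj : injective f.
  move=> l l' e; apply: emb_inj.
  by rewrite -(eqP (s2valP' (pick_l l))) -(eqP (s2valP' (pick_l l'))) -/(f l) e.
rewrite -(cardsT L) -(card_imset _ f_inj); apply: subset_leq_card.
by apply/subsetP=> x /imsetP [l _ ->]; exact: (s2valP (pick_l l)).
Qed.

(* The hexagonal system R_p(p,q).  Oddness of p makes the top row an odd
   paper row, and q >= 2 makes the inset rows non-empty; both are needed for
   the edge description below. *)
Section Hexagonal.
Variables p q : nat.
Hypothesis p_odd : odd p.
Hypothesis q_ge2 : 2 <= q.
Local Notation T := (Rp_vert p q).
Local Notation E := (Rp_edges p q).
Local Notation V := (Rp_vertices p q).

Definition X (u : T) : nat := u.1.
Definition Y (u : T) : nat := u.2.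

Definition mkV (x y : nat) : T :=
  (insubd (Ordinal (ltn_addl (2 * q) (ltnSn 0))) x,
   insubd (Ordinal (ltn_addl p (ltnSn 0))) y).

Lemma mkVX x y : x <= 2 * q -> X (mkV x y) = x.
Proof. by move=> h; rewrite /X /= val_insubd; case: ifP => //; lia. Qed.

Lemma mkVY x y : y <= p -> Y (mkV x y) = y.
Proof. by move=> h; rewrite /Y /= val_insubd; case: ifP => //; lia. Qed.

Lemma X_le (u : T) : X u <= 2 * q.
Proof. by case: u => [[x hx] [y hy]] /=; rewrite /X /=; lia. Qed.

Lemma Y_le (u : T) : Y u <= p.
Proof. by case: u => [[x hx] [y hy]] /=; rewrite /Y /=; lia. Qed.

Lemma vertex_eq (u v : T) : X u = X v -> Y u = Y v -> u = v.
Proof. by case: u v => [a b] [c d]; rewrite /X /Y /= => /val_inj -> /val_inj ->. Qed.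

Definition hedge (u v : T) : bool := (Y v == Y u) && (X v == (X u).+1).
Definition vedge (u v : T) : bool :=
  [&& X v == X u, Y v == (Y u).+1 & odd (X u) == odd (Y u)].
Definition edge (u v : T) : bool := hedge u v || vedge u v.

(* Every horizontal edge lies on a hexagon (the one whose left corner is the
   even-aligned point below or at it). *)
Lemma hadjE (u v : T) : hadj u v = hedge u v.
Proof.
rewrite /hadj /hedge /X /Y; apply/idP/idP => [/andP [-> _] // | /andP [e1 e2]].
rewrite e1 e2 /=.
have hxu := X_le u; have hyu := Y_le u; rewrite /X /Y in hxu hyu.
set hx := if odd u.1 then u.1.-1 else u.1.
set hy := if odd u.2 then u.2.-1 else (u.2 : nat).
have bx : hx <= 2 * q by rewrite /hx; case: ifP; lia.
have by_ : hy <= p by rewrite /hy; case: ifP; lia.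
apply/existsP; exists (mkV hx hy).
rewrite -/(X (mkV hx hy)) -/(Y (mkV hx hy)) mkVX // mkVY // /is_hex /hx /hy.
move: e1 e2 hxu hyu => /eqP e1 /eqP e2; have := X_le v; rewrite /X e2.
by case: (odd u.2) / idP => o2; case: (odd u.1) / idP => o1; case: ifP; lia.
Qed.

(* A rung lies on a hexagon exactly when its column has the parity of its
   row (in odd rows the hexagons are inset). *)
Lemma vadjE (u v : T) : vadj u v = vedge u v.
Proof.
rewrite /vadj /vedge /X /Y.
have hxu := X_le u; have hyu := Y_le u; have hyv := Y_le v.
rewrite /X /Y in hxu hyu hyv.
apply/idP/idP => [/andP [/andP [e1 e3] /existsP [h /andP [/andP [Hh /eqP ey] ex]]] |
                   /and3P [e1 e2 /eqP e3]].
  rewrite e1 e3 /=; apply/eqP; move: Hh; rewrite /is_hex -ey.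
  by case/orP: ex => /eqP ->; case: ifP; lia.
rewrite e1 e2 /=; move/eqP: e2 => e2.
set hx := if odd u.2 then (if u.1 + 3 <= 2 * q then u.1 : nat else u.1 - 2)
          else (if u.1 + 2 <= 2 * q then u.1 : nat else u.1 - 2).
have bx : hx <= 2 * q by rewrite /hx; case: ifP; case: ifP; lia.
apply/existsP; exists (mkV hx u.2).
rewrite -/(X (mkV hx u.2)) -/(Y (mkV hx u.2)) mkVX // mkVY // /is_hex /hx eqxx /=.
by case: (odd u.2) / idP => o2; case: ifP => c; lia.
Qed.

Lemma adjE (u v : T) : Rp_adj u v = edge u v.
Proof. by rewrite /Rp_adj hadjE vadjE. Qed.

Lemma edge_mem (u v : T) : edge u v -> [set u; v] \in E.
Proof. by move=> h; apply/imset2P; exists u v; rewrite // inE adjE. Qed.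

Lemma edgeP e : e \in E -> exists u v : T, e = [set u; v] /\ edge u v.
Proof. by case/imset2P=> u v _; rewrite inE adjE => h ->; exists u, v. Qed.

Lemma edge_neq (u v : T) : edge u v -> u != v.
Proof. by move=> h; apply/eqP=> e; move: h; rewrite e /edge /hedge /vedge; lia. Qed.

(* Every point of the grid is a vertex: it has a horizontal neighbour. *)
Lemma in_V (u : T) : u \in V.
Proof.
rewrite inE; apply/existsP; have hx := X_le u; have hy := Y_le u.
case: (ltnP (X u) (2 * q)) => c.
  exists (mkV (X u).+1 (Y u)); rewrite adjE /edge /hedge mkVX // mkVY //.
  by rewrite !eqxx.
exists (mkV (X u).-1 (Y u)); rewrite [Rp_adj _ u]adjE /edge /hedge mkVX ?mkVY //;
  last lia.
rewrite (_ : Y u == Y u) // (_ : X u == (X u).-1.+1) ?orbT //; apply/eqP; lia.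
Qed.

Lemma V_setT : V = setT.
Proof. by apply/setP=> u; rewrite in_V inE. Qed.

Definition rung_on (y : nat) (e : {set T}) : bool :=
  [exists u : T, exists v : T, [&& u \in e, v \in e, vedge u v & Y u == y]].

Lemma rung_onE (a b : T) y : edge a b -> rung_on y [set a; b] = vedge a b && (Y a == y).
Proof.
move=> hab; apply/idP/idP; last first.
  case/andP=> h1 h2; apply/existsP; exists a; apply/existsP; exists b.
  by rewrite set21 set22 h1 h2.
case/existsP=> u /existsP [v /and4P [/set2P hu /set2P hv huv /eqP hy]].
have [_ /eqP h2 _] := and3P huv.
case: hu => ?; case: hv => ?; subst; case/orP: hab => hab.
all: try (move: hab; rewrite /hedge => /andP [/eqP x1 /eqP x2]; exfalso; lia).
all: rewrite hab /=; move: hab; rewrite /vedge => /and3P [/eqP x1 /eqP x2 _].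
all: apply/eqP; lia.
Qed.

Lemma rung_onP (M : {set {set T}}) y f : M \subset E -> f \in M -> rung_on y f ->
  exists a b, f = [set a; b] /\ vedge a b /\ Y a = y.
Proof.
move=> sME fM; have [a [b [-> hab]]] := edgeP (subsetP sME f fM).
by rewrite rung_onE // => /andP [h1 /eqP h2]; exists a, b.
Qed.

Local Open Scope ring_scope.

Definition sign (x : nat) : int := if odd x then -1 else 1.
Definition row_weight (y : nat) (v : T) : int := if Y v == y then sign (X v) else 0.

Lemma edge_weight (a b : T) y : edge a b ->
  \sum_(v in [set a; b]) row_weight y v =
  sign y * (rung_on y [set a; b])%:R +
  (if y is y'.+1 then sign y' * (rung_on y' [set a; b])%:R else 0).
Proof.
move=> hab; rewrite big_set2 ?edge_neq //.
have hr z : rung_on z [set a; b] = vedge a b && (Y a == z) by rewrite rung_onE.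
case/orP: hab => hab.
  have hv : vedge a b = false.
    by move: hab; rewrite /hedge /vedge => /andP [/eqP -> /eqP ->]; lia.
  move: hab; rewrite /hedge /row_weight /sign => /andP [/eqP ea /eqP eb].
  case: y => [|y]; rewrite !hr hv ea eb /=;
  by case: ifP => _; case: (odd (X a)) => /=; lia.
move: (hab); rewrite /vedge /row_weight /sign => /and3P [/eqP ea /eqP eb /eqP ep].
by case: y => [|y]; rewrite !hr hab ea eb ep /=; repeat case: ifP => ?; lia.
Qed.

Lemma sum_sign k : \sum_(i < 2 * k + 1) sign i = 1.
Proof.
rewrite -(big_mkord xpredT); elim: k => [|k IH]; first by rewrite big_nat1.
rewrite (_ : (2 * k.+1 + 1 = (2 * k + 1).+2)%N); last lia.
rewrite !big_nat_recr //= IH /sign.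
rewrite (_ : odd (2 * k + 1) = true); last lia.
by rewrite (_ : odd (2 * k + 1).+1 = false); last lia.
Qed.

(* Each row has total weight 1, as it has 2q+1 points. *)
Lemma row_weight_total y : (y <= p)%N -> \sum_(v : T) row_weight y v = 1.
Proof.
move=> hy.
rewrite (eq_bigr (fun v => row_weight y (v.1, v.2))); last by case.
rewrite -(pair_bigA _ (fun i j => row_weight y (i, j))) /=.
have hy' : (y < p + 1)%N by lia.
rewrite -[RHS](sum_sign q); apply: eq_bigr => i _.
rewrite (bigD1 (Ordinal hy')) //= big1 ?addr0; first by rewrite /row_weight /X /Y /= eqxx.
move=> j jne; rewrite /row_weight /Y /=; case: eqP => // h.
by move/eqP: jne; case; apply: val_inj.
Qed.

Section ParityLemma.
Variable M : {set {set T}}.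
Hypothesis pmM : perfect_matching V E M.

(* Summing edge by edge over M counts every vertex once. *)
Lemma matching_weight y : (y <= p)%N -> \sum_(e in M) \sum_(v in e) row_weight y v = 1.
Proof.
move=> hy; rewrite -(row_weight_total hy).
transitivity (\sum_(e in M) \sum_(v : T) (if v \in e then row_weight y v else 0)).
  by apply: eq_bigr => e _; rewrite big_mkcond.
rewrite exchange_big /=; apply: eq_bigr => v _.
rewrite -big_mkcondr sumr_const (_ : #|_| = 1%N) ?mulr1n //.
by apply: etrans (pm_card pmM (in_V v)); apply: eq_card => e; rewrite !inE.
Qed.

Lemma sum_rung_on z :
  \sum_(e in M) ((rung_on z e)%:R : int) = (#|[set e in M | rung_on z e]|)%:R.
Proof.
rewrite -natr_sum; congr (_%:R).
rewrite (eq_bigr (fun e => if rung_on z e then 1%N else 0%N));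
  last by move=> e _; case: (rung_on z e).
rewrite -big_mkcondr sum1_card; apply: eq_card => e; by rewrite !inE.
Qed.

Lemma row_balance z : (z <= p)%N ->
  sign z * (#|[set e in M | rung_on z e]|)%:R +
  (if z is z'.+1 then sign z' * (#|[set e in M | rung_on z' e]|)%:R else 0) = 1.
Proof.
move=> hz; rewrite -[RHS](matching_weight hz).
have edge_sum e : e \in M -> \sum_(v in e) row_weight z v =
  sign z * (rung_on z e)%:R + (if z is z'.+1 then sign z' * (rung_on z' e)%:R else 0).
  move=> eM; have [a [b [-> hab]]] := edgeP (subsetP (pm_subset pmM) e eM).
  by rewrite edge_weight.
rewrite (eq_bigr _ edge_sum) big_split /= -mulr_sumr sum_rung_on; congr (_ + _).
by case: z {hz edge_sum} => [|z]; [rewrite big1 | rewrite -mulr_sumr sum_rung_on].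
Qed.

Lemma rung_count y : (y < p)%N -> #|[set e in M | rung_on y e]| = ~~ odd y.
Proof.
elim: y => [|y IH] hy; have := row_balance (ltnW hy).
  by rewrite /sign /= mul1r addr0; lia.
by rewrite /= IH; [rewrite /sign /=; case: (odd y) => /=; lia | lia].
Qed.
End ParityLemma.

Local Close Scope ring_scope.

Section Rungs.
Variable M : {set {set T}}.
Hypothesis pmM : perfect_matching V E M.

Lemma rung_row_even a b : [set a; b] \in M -> vedge a b -> ~~ odd (Y a).
Proof.
move=> abM hv; apply/negP => ho.
have hy : Y a < p by move: hv (Y_le b); rewrite /vedge => /and3P [_ /eqP -> _]; lia.
have /eqP := rung_count pmM hy; rewrite ho cards_eq0 => /eqP h.
have : [set a; b] \in [set e in M | rung_on (Y a) e].
  by rewrite inE abM rung_onE /edge ?hv ?orbT ?eqxx.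
by rewrite h inE.
Qed.

Lemma rung_exists y : y < p -> ~~ odd y -> exists2 f, f \in M & rung_on y f.
Proof.
move=> hy hev; have := rung_count pmM hy; rewrite hev => /eqP /cards1P [g hg].
have : g \in [set e in M | rung_on y e] by rewrite hg set11.
by rewrite inE => /andP [h1 h2]; exists g.
Qed.

Lemma rung_unique y e f : y < p -> ~~ odd y -> e \in M -> f \in M ->
  rung_on y e -> rung_on y f -> e = f.
Proof.
move=> hy hev eM fM ye yf; have := rung_count pmM hy; rewrite hev => /eqP /cards1P [g hg].
have : e \in [set e in M | rung_on y e] by rewrite inE eM ye.
have : f \in [set e in M | rung_on y e] by rewrite inE fM yf.
by rewrite hg => /set1P -> /set1P ->.
Qed.
End Rungs.

Lemma hedge_vedge_neq (a b c d : T) : hedge a b -> vedge c d -> [set c; d] <> [set a; b].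
Proof.
move=> /andP [/eqP yab _] /and3P [_ /eqP ycd _] e.
have /set2P hc : c \in [set a; b] by rewrite -e set21.
have /set2P hd : d \in [set a; b] by rewrite -e set22.
by case: hc hd => ? [] ?; subst; lia.
Qed.

(* The rows form J = (p+1)/2 blocks {2j, 2j+1}.  An edge is
   labelled by the block containing it (a quarter of the sum of the rows of its
   ends) and a column index k <= q read off the sum of the columns of its ends:
   the rung at column 2k and the horizontal edges between columns 2k-2 and
   2k-1 (or 1 and 2 when k = 0) get index k. *)
Definition J := (p + 1) %/ 2.
Definition column_label (s : nat) : nat := if s == 3 then 0 else (s + 3) %/ 4.
Definition label (e : {set T}) : nat * nat :=
  ((\sum_(v in e) Y v) %/ 4, column_label (\sum_(v in e) X v)).

Lemma label2 (a b : T) : a != b ->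
  label [set a; b] = ((Y a + Y b) %/ 4, column_label (X a + X b)).
Proof. by move=> ab; rewrite /label !big_set2. Qed.

Definition even_rung (i : 'I_J * 'I_(q + 1)) : {set T} :=
  [set mkV (2 * i.2) (2 * i.1); mkV (2 * i.2) (2 * i.1 + 1)].
Definition even_rungs : {set {set T}} := [set even_rung i | i in setT].

Lemma even_rung_vedge (i : 'I_J * 'I_(q + 1)) :
  vedge (mkV (2 * i.2) (2 * i.1)) (mkV (2 * i.2) (2 * i.1 + 1)).
Proof.
have := ltn_ord i.2; have := ltn_ord i.1; rewrite /J => hj hk.
by rewrite /vedge !mkVX ?mkVY; lia.
Qed.

Lemma label_even_rung i : label (even_rung i) = (i.1 : nat, i.2 : nat).
Proof.
rewrite label2 ?edge_neq /edge ?even_rung_vedge ?orbT //.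
have := ltn_ord i.2; have := ltn_ord i.1; rewrite /J => hj hk.
rewrite !mkVX ?mkVY /column_label; try lia.
by congr pair; [lia | case: ifP; lia].
Qed.

Lemma even_rung_inj : injective even_rung.
Proof.
move=> [i1 i2] [i1' i2'] /(congr1 label); rewrite !label_even_rung /=.
by case=> /val_inj -> /val_inj ->.
Qed.

Lemma card_even_rungs : #|even_rungs| = J * (q + 1).
Proof. by rewrite card_imset ?cardsT ?card_prod ?card_ord //; exact: even_rung_inj. Qed.

Lemma even_rungs_sub : even_rungs \subset E.
Proof.
by apply/subsetP=> e /imsetP [i _ ->]; apply: edge_mem; rewrite /edge even_rung_vedge orbT.
Qed.

Lemma even_rungsP (a b : T) : vedge a b -> ~~ odd (Y a) -> [set a; b] \in even_rungs.
Proof.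
move=> hv he; have hb := Y_le b; have ha := X_le a.
move: hv => /and3P [/eqP e1 /eqP e2 /eqP e3].
have hj : Y a %/ 2 < J by rewrite /J; lia.
have hk : X a %/ 2 < q + 1 by lia.
apply/imsetP; exists (Ordinal hj, Ordinal hk) => //.
by rewrite /even_rung /=; congr [set _; _]; apply: vertex_eq; rewrite ?mkVX ?mkVY; lia.
Qed.

Section Forcing.
Variables M M' : {set {set T}}.
Hypothesis pmM : perfect_matching V E M.
Hypothesis pmM' : perfect_matching V E M'.
Hypothesis rungs_kept : even_rungs :&: M \subset M'.

Lemma rung_kept a b : [set a; b] \in M -> vedge a b -> [set a; b] \in M'.
Proof.
move=> abM hv; apply: (subsetP rungs_kept); rewrite inE abM andbT.
exact: even_rungsP hv (rung_row_even pmM abM hv).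
Qed.

(* M' cannot cover an end of a horizontal edge of M by a rung: that rung
   would be the unique rung of M' on its (even) row, which also is the even
   rung of M on that row. *)
Lemma no_rung_at_hedge a b c d : [set a; b] \in M -> hedge a b ->
  [set c; d] \in M' -> vedge c d -> a \in [set c; d] -> False.
Proof.
move=> abM hab cdM' hcd acd.
have ev := rung_row_even pmM' cdM' hcd.
have hy : Y c < p by move: hcd (Y_le d); rewrite /vedge => /and3P [_ /eqP -> _]; lia.
have [f fM yf] := rung_exists pmM hy ev.
have [g [h [fgh [hgh _]]]] := rung_onP (pm_subset pmM) fM yf.
have fM' : f \in M' by rewrite fgh; apply: rung_kept; rewrite -?fgh.
have ycd : rung_on (Y c) [set c; d] by rewrite rung_onE /edge ?hcd ?orbT // eqxx.
have fcd := rung_unique pmM' hy ev fM' cdM' yf ycd.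
have cdM : [set c; d] \in M by rewrite -fcd.
exact: hedge_vedge_neq hab hcd (pm_unique pmM (in_V a) cdM abM acd (set21 a b)).
Qed.

Definition kept_left_of (n : nat) : Prop :=
  forall w : T, X w < n -> forall e, e \in M -> w \in e -> e \in M'.

(* A horizontal edge {a, b} of M lies in M' once all edges of M further left
   do: M' covers a neither by a rung nor by an edge going left. *)
Lemma hedge_kept a b : kept_left_of (X a) ->
  [set a; b] \in M -> hedge a b -> [set a; b] \in M'.
Proof.
move=> left_kept abM hab; move: (hab) => /andP [/eqP yab /eqP xab].
have [e' e'M' ae'] := pm_cover pmM' (in_V a).
have [c [d [ecd hcd]]] := edgeP (subsetP (pm_subset pmM') e' e'M'); subst e'.
case/orP: hcd => hcd; last by case: (no_rung_at_hedge abM hab e'M' hcd ae').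
move: (hcd) => /andP [/eqP ycd /eqP xcd].
case/set2P: ae' => ac; subst a.
  by have -> : b = d by apply: vertex_eq; [rewrite xab xcd | rewrite yab ycd].
have [f fM cf] := pm_cover pmM (in_V c).
have fM' : f \in M' by apply: (left_kept c) => //; rewrite xcd.
have fcd := pm_unique pmM' (in_V c) fM' e'M' cf (set21 c d).
have dfM : d \in f by rewrite fcd set22.
have fab := pm_unique pmM (in_V d) fM abM dfM (set21 d b).
by move: cf xab xcd; rewrite fab => /set2P [] ->; clear; lia.
Qed.

Lemma M_sub_M' : M \subset M'.
Proof.
have edges_kept n : kept_left_of n.
  elim: n => [|n IHn] w hw e eM we; first by [].
  have [a [b [eab hab]]] := edgeP (subsetP (pm_subset pmM) e eM); subst e.
  case/orP: hab => hab; last exact: rung_kept.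
  case/set2P: we => wa; subst w.
    by apply: hedge_kept => // v hv; apply: IHn; exact: leq_trans hv hw.
  by apply: (IHn a); rewrite ?set21 //; move: hab => /andP [_ /eqP <-].
apply/subsetP=> e eM; have [a [b [eab _]]] := edgeP (subsetP (pm_subset pmM) e eM).
by apply: (edges_kept (X a).+1 a) => //; rewrite eab set21.
Qed.

Lemma forced : M' = M.
Proof.
apply/eqP; rewrite eqEsubset M_sub_M' andbT; apply/subsetP=> e eM'.
have [a [b [eab _]]] := edgeP (subsetP (pm_subset pmM') e eM').
have [f fM af] := pm_cover pmM (in_V a).
have fM' := subsetP M_sub_M' f fM.
by rewrite (pm_unique pmM' (in_V a) eM' fM' _ af) // eab set21.
Qed.
End Forcing.

Lemma even_rungs_cfs : complete_forcing_set V E even_rungs.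
Proof.
rewrite /complete_forcing_set even_rungs_sub; apply/forall_inP=> M pmM.
rewrite /forcing_set subsetIr; apply/forall_inP=> M' /andP [pmM' kept].
by rewrite (forced pmM pmM' kept).
Qed.

(* A block matching places, in each block of rows {2j, 2j+1},
   one rung at column 2k and matches the other vertices of both rows
   horizontally: (0,1), ..., (2k-2,2k-1) left of the rung and (2k+1,2k+2),
   ..., (2q-1,2q) right of it.  The point (x,y) is matched to
   (partner_x k x y, partner_y k x y). *)
Definition partner_x (k x y : nat) : nat :=
  if x == 2 * k then x else if x < 2 * k then (if odd x then x.-1 else x.+1)
  else (if odd x then x.+1 else x.-1).
Definition partner_y (k x y : nat) : nat :=
  if x == 2 * k then (if odd y then y.-1 else y.+1) else y.

Lemma partner_x_le k x y : k <= q -> x <= 2 * q -> partner_x k x y <= 2 * q.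
Proof. by rewrite /partner_x => ??; repeat case: ifP => ?; lia. Qed.

(* The rows come in pairs because p is odd. *)
Lemma partner_y_le k x y : y <= p -> partner_y k x y <= p.
Proof. by rewrite /partner_y => ?; repeat case: ifP => ?; lia. Qed.

Lemma partner_y_half k x y : (partner_y k x y)./2 = y./2.
Proof. by rewrite /partner_y; repeat case: ifP => ?; lia. Qed.

Lemma partner_xK k x y : x <= 2 * q ->
  partner_x k (partner_x k x y) (partner_y k x y) = x.
Proof.
rewrite /partner_x /partner_y => ?; case: (ltngtP x (2 * k)) => ?;
by case ox: (odd x); case oy: (odd y) => /=; repeat case: ifP => ?; lia.
Qed.

Lemma partner_yK k x y : partner_y k (partner_x k x y) (partner_y k x y) = y.
Proof.
rewrite /partner_x /partner_y; case: (ltngtP x (2 * k)) => ?;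
by case ox: (odd x); case oy: (odd y) => /=; repeat case: ifP => ?; lia.
Qed.

Section BlockMatching.
(* cols j is the column index of the rung of block j. *)
Variable cols : nat -> nat.
Hypothesis cols_le : forall j, cols j <= q.

Definition partner (v : T) : T :=
  mkV (partner_x (cols (Y v)./2) (X v) (Y v)) (partner_y (cols (Y v)./2) (X v) (Y v)).

Lemma partnerX v : X (partner v) = partner_x (cols (Y v)./2) (X v) (Y v).
Proof. by rewrite mkVX // partner_x_le // X_le. Qed.

Lemma partnerY v : Y (partner v) = partner_y (cols (Y v)./2) (X v) (Y v).
Proof. by rewrite mkVY // partner_y_le // Y_le. Qed.

Lemma partnerK : involutive partner.
Proof.
move=> v; apply: vertex_eq.
  by rewrite partnerX partnerY partnerX partner_y_half partner_xK // X_le.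
by rewrite partnerY partnerY partnerX partner_y_half partner_yK.
Qed.

Lemma partner_neq v : v != partner v.
Proof.
apply/eqP=> e; have := partnerX v; have := partnerY v; rewrite -e.
rewrite /partner_x /partner_y; move: (cols (Y v)./2) (X v) (Y v) => k x y.
by repeat case: ifP => ?; lia.
Qed.

Lemma partner_edge v : [set v; partner v] \in E.
Proof.
have hx := X_le v; have hy := Y_le v; have hk := cols_le (Y v)./2.
have := partnerX v; have := partnerY v; rewrite /partner_x /partner_y.
have h1 : edge v (partner v) -> [set v; partner v] \in E by exact: edge_mem.
have h2 : edge (partner v) v -> [set v; partner v] \in E.
  by move=> h; rewrite setUC; exact: edge_mem.
move: h1 h2; rewrite /edge /hedge /vedge.
move: (cols (Y v)./2) (X v) (Y v) (X (partner v)) (Y (partner v)) hx hy hk.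
move=> k a b c d hx hy hk h1 h2; repeat case: ifP => ?; move=> ed ec.
all: first [ apply: h1; apply/orP; left; apply/andP; split; apply/eqP; lia
           | apply: h1; apply/orP; right; apply/and3P; split; apply/eqP; lia
           | apply: h2; apply/orP; left; apply/andP; split; apply/eqP; lia
           | apply: h2; apply/orP; right; apply/and3P; split; apply/eqP; lia ].
Qed.

Definition block_matching : {set {set T}} := matching_of partner.

Lemma block_matching_pm : perfect_matching V E block_matching.
Proof. by rewrite V_setT; exact: matching_of_pm partnerK partner_edge. Qed.
End BlockMatching.

(* The two block matchings used for block j and column index k: the rung of
   block j sits at column 2k, resp. at the neighbouring even column; all other
   rungs sit at column 0. *)
Definition neighbour_col (k : nat) : nat := if k == 0 then 1 else k.-1.
Definition block_cols (j k : nat) : nat -> nat := fun i => if i == j then k else 0.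

Lemma block_cols_le j k : k <= q -> forall i, block_cols j k i <= q.
Proof. by move=> hk i; rewrite /block_cols; case: ifP. Qed.

Lemma neighbour_col_le k : k <= q -> neighbour_col k <= q.
Proof. by rewrite /neighbour_col; case: ifP; lia. Qed.

(* The two block matchings differ exactly on the alternating hexagon between
   the two rung positions, whose edges all carry the label (j, k). *)
Lemma label_of_difference j k x y : j < J -> k <= q -> x <= 2 * q -> y <= p ->
  let k1 := block_cols j k y./2 in
  let k2 := block_cols j (neighbour_col k) y./2 in
  ~ (partner_x k1 x y = partner_x k2 x y /\ partner_y k1 x y = partner_y k2 x y) ->
  (y + partner_y k1 x y) %/ 4 = j /\ column_label (x + partner_x k1 x y) = k.
Proof.
rewrite /J /block_cols /neighbour_col => hj hk hx hy /=.
case: eqP => hb /=; last by case.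
rewrite /partner_x /partner_y /column_label.
case: (ltngtP x (2 * k)) => c1; case hk0: (k == 0) => /=;
by case ox: (odd x); case oy: (odd y) => /=; repeat case: ifP => ?; lia.
Qed.

(* The two block matchings for (j, k) are distinct: they match (2k, 2j)
   differently. *)
Lemma block_matchings_neq j k : j < J -> k <= q ->
  block_matching (block_cols j k) != block_matching (block_cols j (neighbour_col k)).
Proof.
move=> hj hk; apply/eqP=> eM.
have hJ : 2 * j <= p by move: hj; rewrite /J; lia.
set v := mkV (2 * k) (2 * j).
have vM : [set v; partner (block_cols j k) v] \in block_matching (block_cols j k).
  by apply/imsetP; exists v.
rewrite eM in vM.
have := matching_ofP (partnerK (block_cols_le _ (neighbour_col_le hk))) vM.
move/(congr1 Y); rewrite !partnerY /v mkVX ?mkVY; try lia.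
have -> : (2 * j)./2 = j by lia.
rewrite /block_cols /neighbour_col /partner_y eqxx.
by case: (k == 0) / eqP => /=; repeat case: ifP => ?; lia.
Qed.

Lemma label_hit S : complete_forcing_set V E S ->
  forall j k, j < J -> k <= q -> exists2 e, e \in S & label e = (j, k).
Proof.
move=> cfS j k hj hk.
have cols1_le := block_cols_le j hk.
have cols2_le := block_cols_le j (neighbour_col_le hk).
have [e /setIP [eS eM1] eM2] := cfs_separates cfS (block_matching_pm cols1_le)
  (block_matching_pm cols2_le) (block_matchings_neq hj hk).
exists e => //; case/imsetP: eM1 => v _ ev; subst e.
have hdiff : ~ (partner_x (block_cols j k (Y v)./2) (X v) (Y v) =
                partner_x (block_cols j (neighbour_col k) (Y v)./2) (X v) (Y v) /\
                partner_y (block_cols j k (Y v)./2) (X v) (Y v) =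
                partner_y (block_cols j (neighbour_col k) (Y v)./2) (X v) (Y v)).
  case=> ex ey; move/negP: eM2; apply; apply/imsetP; exists v => //.
  congr [set _; _]; apply: vertex_eq; last by rewrite !partnerY.
  by rewrite (partnerX cols1_le) (partnerX cols2_le).
have [lj lk] := label_of_difference hj hk (X_le v) (Y_le v) hdiff.
by rewrite label2 ?partner_neq // (partnerX cols1_le) partnerY lj lk.
Qed.
End Hexagonal.

Theorem mainTheorem11 (p q : nat) :
  odd p -> 1 <= p -> 2 <= q ->
  cf_eq (Rp_vertices p q) (Rp_edges p q) ((p + 1) %/ 2 * (q + 1)).
Proof.
move=> p_odd _ q_ge2; split.
  by exists (even_rungs p q); split; [exact: even_rungs_cfs | exact: card_even_rungs].
move=> S cfS.
have labels_hit (i : 'I_(J p) * 'I_(q + 1)) :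
    exists2 e, e \in S & label e = (val i.1, val i.2).
  case: i => [[j hj] [k hk]] /=; apply: (label_hit p_odd q_ge2 cfS hj).
  by rewrite addn1 ltnS in hk.
have emb_inj : injective (fun i : 'I_(J p) * 'I_(q + 1) => (val i.1, val i.2)).
  by move=> [i1 i2] [i1' i2'] [/val_inj -> /val_inj ->].
by have := card_ge_of_labels emb_inj labels_hit; rewrite card_prod !card_ord.
Qed.
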